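(* Let $\Omega\subset\mathbb{R}^2$ be a bounded domain, $X\subset\overline{\Omega}$ finite with $X\setminus\partial\Omega\subset\mathrm{int}(\mathrm{conv}(X\cap\partial\Omega))$, $f_X$ a discrete load on $X$, and $E_0,V_0>0$. Then $$\mathcal{C}_{X,\min}\ge\frac{(\mathcal{Z}_X)^2}{2E_0V_0}.$$
   Context: Discrete setting: $\bar n=\#X$, $n=\#(X\setminus\partial\Omega)$, enumeration $\chi:\{1,\dots,n\}\to X\setminus\partial\Omega$; $m=\bar n(\bar n-1)/2$, enumeration $k\mapsto\{\chi_-(k),\chi_+(k)\}$ of unordered pairs of distinct points of $X$. $f_i=f_X(\{\chi(i)\})$, $l_k=|\chi_+(k)-\chi_-(k)|$. Vectors in $\mathbb{R}^n$ are identified with functions on $X$ vanishing on $X\cap\partial\Omega$. $(\mathbf{B}_1\mathbf{u}_1+\mathbf{B}_2\mathbf{u}_2)_k=(u(\chi_+(k))-u(\chi_-(k)))\cdot(\chi_+(k)-\chi_-(k))/l_k$, $(\mathbf{D}\mathbf{w})_k=w(\chi_+(k))-w(\chi_-(k))$. $\mathrm{K}=\{(t_1,t_2,t_3):t_1,t_2\ge0,2t_1t_2\ge t_3^2\}$. $\mathcal{Z}_X:=\min\{\mathbf{l}^\top\mathbf{s}+2\mathbf{l}^\top\mathbf{r}:\mathbf{s},\mathbf{r}\in\mathbb{R}^m_+,\mathbf{q}\in\mathbb{R}^m,\mathbf{B}_1^\top\mathbf{s}=\mathbf{B}_2^\top\mathbf{s}=\mathbf{0},\mathbf{D}^\top\mathbf{q}=\mathbf{f},(r_k,s_k,q_k)\in\mathrm{K}\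 \forall k\}$ (problem $(\mathcal{P}_X)$). For $\mathbf{z}\in\mathbb{R}^n$: $\Delta_k(\mathbf{z})=(\mathbf{D}\mathbf{z})_k/l_k$, $J_{kk}(\mathbf{z})=\sqrt{1+\Delta_k(\mathbf{z})^2}$, $\hat l_k(\mathbf{z})=J_{kk}(\mathbf{z})l_k$; $\mathrm{e}_k(\mathbf{u}_1,\mathbf{u}_2)=(\mathbf{B}_1\mathbf{u}_1+\mathbf{B}_2\mathbf{u}_2)_k/l_k$; $\hat{\mathrm{e}}_k(\mathbf{u}_1,\mathbf{u}_2,\mathbf{w};\mathbf{z})=\dfrac{\mathrm{e}_k(\mathbf{u}_1,\mathbf{u}_2)+\Delta_k(\mathbf{z})\Delta_k(\mathbf{w})}{1+\Delta_k(\mathbf{z})^2}$. Compliance of $(\mathbf{z},\mathbf{a})$, $\mathbf{a}\in\mathbb{R}^m_+$: $\mathcal{C}_X(\mathbf{z},\mathbf{a})=\sup_{\mathbf{u}_1,\mathbf{u}_2,\mathbf{w}\in\mathbb{R}^n}\{\mathbf{f}^\top\mathbf{w}-\frac{E_0}{2}\sum_k((\hat{\mathrm{e}}_k(\mathbf{u}_1,\mathbf{u}_2,\mathbf{w};\mathbf{z}))_+)^2a_k\hat l_k(\mathbf{z})\}$. It is known (standard duality) that equivalently $\mathcal{C}_X(\mathbf{z},\mathbf{a})=\inf\{\frac{1}{2E_0}\sum_k\frac{\hat s_k^2}{a_k}\hat l_k(\mathbf{z}):\hat{\mathbf{s}}\in\mathbb{R}^m_+,\mathbf{B}_1^\top\mathbf{s}=\mathbf{B}_2^\top\mathbf{s}=\mathbf{0},\mathbf{D}^\top\mathbf{q}=\mathbf{f},\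 s_k=\hat s_k/J_{kk}(\mathbf{z}),q_k=\Delta_k(\mathbf{z})\hat s_k/J_{kk}(\mathbf{z})\}$ with $\hat s_k^2/a_k:=0$ if $a_k=\hat s_k=0$ and $+\infty$ if $a_k=0\neq\hat s_k$. $(\mathrm{MCGS}_X)$: $\mathcal{C}_{X,\min}=\inf\{\mathcal{C}_X(\mathbf{z},\mathbf{a}):\mathbf{z}\in\mathbb{R}^n,\mathbf{a}\in\mathbb{R}^m_+,\sum_ka_k\hat l_k(\mathbf{z})\le V_0\}$. *)

From HB Require Import structures.
From mathcomp Require Import all_boot all_order all_algebra.
From mathcomp Require Import all_classical all_reals all_analysis.
Set Implicit Arguments. Unset Strict Implicit. Unset Printing Implicit Defensive.
Import Order.TTheory GRing.Theory Num.Theory numFieldNormedType.Exports.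
Local Open Scope classical_set_scope.
Local Open Scope ring_scope.

Section Discrete.
Variable R : realType.

Local Notation pt := (R * R)%type.
Definition elen (p q : pt) : R := Num.sqrt ((q.1 - p.1) ^+ 2 + (q.2 - p.2) ^+ 2).

Definition bdry (A : set pt) : set pt := closure A `\` interior A.

Definition bounded_domain (Om : set pt) : Prop :=
  Om !=set0 /\ open Om /\ connected Om /\
  exists M : R, forall p, Om p -> `|p.1| <= M /\ `|p.2| <= M.

Definition conv_hull (nb : nat) (x : 'I_nb -> pt) (P : 'I_nb -> Prop) : set pt :=
  [set p | exists lam : 'I_nb -> R,
      (forall i, 0 <= lam i) /\ (forall i, ~ P i -> lam i = 0) /\
      \sum_(i < nb) lam i = 1 /\
      p = (\sum_(i < nb) lam i * (x i).1, \sum_(i < nb) lam i * (x i).2)].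

Variables (Om : set pt) (nb : nat) (x : 'I_nb -> pt).

Definition onB (i : 'I_nb) : Prop := bdry Om (x i).
(** vectors of R^n = functions on X vanishing on X ∩ ∂Ω *)
Definition vanB (u : 'I_nb -> R) : Prop := forall i, onB i -> u i = 0.

(** Unordered pairs {a,b} of distinct nodes are indexed by a < b, with
    chi_-(k) = a, chi_+(k) = b.  Edge quantities are functions 'I_nb -> 'I_nb -> R
    whose values for a >= b are irrelevant. *)
Definition psum (F : 'I_nb -> 'I_nb -> R) : R :=
  \sum_(a < nb) \sum_(b < nb | (a < b)%N) F a b.

Definition len (a b : 'I_nb) : R := elen (x a) (x b).

Definition Bu (u1 u2 : 'I_nb -> R) (a b : 'I_nb) : R :=
  ((u1 b - u1 a) * ((x b).1 - (x a).1) + (u2 b - u2 a) * ((x b).2 - (x a).2)) / len a b.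
Definition Dw (w : 'I_nb -> R) (a b : 'I_nb) : R := w b - w a.

Definition inc (i a b : 'I_nb) : R := (b == i)%:R - (a == i)%:R.
Definition B1t (s : 'I_nb -> 'I_nb -> R) (i : 'I_nb) : R :=
  psum (fun a b => s a b * inc i a b * ((x b).1 - (x a).1) / len a b).
Definition B2t (s : 'I_nb -> 'I_nb -> R) (i : 'I_nb) : R :=
  psum (fun a b => s a b * inc i a b * ((x b).2 - (x a).2) / len a b).
Definition Dt (q : 'I_nb -> 'I_nb -> R) (i : 'I_nb) : R :=
  psum (fun a b => q a b * inc i a b).

Definition inK (t1 t2 t3 : R) : Prop := 0 <= t1 /\ 0 <= t2 /\ t3 ^+ 2 <= 2 * t1 * t2.

Variable f : 'I_nb -> R.   (* f_i = f_X({chi(i)}) at interior nodes *)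

Definition PX_values : set R :=
  [set v | exists s r q : 'I_nb -> 'I_nb -> R,
     (forall a b, 0 <= s a b) /\ (forall a b, 0 <= r a b) /\
     (forall i, ~ onB i -> B1t s i = 0 /\ B2t s i = 0 /\ Dt q i = f i) /\
     (forall a b : 'I_nb, (a < b)%N -> inK (r a b) (s a b) (q a b)) /\
     v = psum (fun a b => len a b * s a b) + 2 * psum (fun a b => len a b * r a b)].

(** Z_X := min (P_X), taken as the infimum of the feasible values *)
Definition ZX : R := inf PX_values.

Definition Delta (z : 'I_nb -> R) a b : R := Dw z a b / len a b.
Definition Jkk (z : 'I_nb -> R) a b : R := Num.sqrt (1 + Delta z a b ^+ 2).
Definition lhat (z : 'I_nb -> R) a b : R := Jkk z a b * len a b.
Definition ek (u1 u2 : 'I_nb -> R) a b : R := Bu u1 u2 a b / len a b.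
Definition ehat (u1 u2 w z : 'I_nb -> R) a b : R :=
  (ek u1 u2 a b + Delta z a b * Delta w a b) / (1 + Delta z a b ^+ 2).

Variable E0 : R.

Definition CX (z : 'I_nb -> R) (al : 'I_nb -> 'I_nb -> R) : \bar R :=
  ereal_sup [set y | exists u1 u2 w : 'I_nb -> R,
     vanB u1 /\ vanB u2 /\ vanB w /\
     y = (\sum_(i < nb) f i * w i
          - E0 / 2 * psum (fun a b =>
               (Num.max (ehat u1 u2 w z a b) 0) ^+ 2 * al a b * lhat z a b))%:E].

Variable V0 : R.

Definition CXmin : \bar R :=
  ereal_inf [set y | exists (z : 'I_nb -> R) (al : 'I_nb -> 'I_nb -> R),
     vanB z /\ (forall a b, 0 <= al a b) /\
     psum (fun a b => al a b * lhat z a b) <= V0 /\ y = CX z al].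

End Discrete.

From HB Require Import structures.
From mathcomp Require Import all_boot all_order all_algebra.
From mathcomp Require Import all_classical all_reals all_analysis.
From mathcomp Require Import unstable ring lra.
Import Order.TTheory GRing.Theory Num.Theory numFieldNormedType.Exports.
Local Open Scope classical_set_scope.
Local Open Scope ring_scope.
Set Implicit Arguments. Unset Strict Implicit. Unset Printing Implicit Defensive.

(* Weak duality.  Fix a design (z, a) of volume at most V0 and Y < Z_X.  There
   is a displacement (u1, u2, w), vanishing on the boundary, whose linearised
   strains satisfy ê <= 1 on every bar and whose work f.w is at least Y:
   otherwise the inhomogeneous Farkas lemma writes the work as a combination
   sum_k λ_k ê_k with λ >= 0 and sum_k λ_k <= Y, and
   s = λ / (l (1 + Δ^2)), q = Δ s, r = Δ^2 s / 2 is a feasible point of (P_X)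
   of value at most sum_k λ_k < Z_X.  Testing the compliance with t times that
   displacement, t = Y / (E0 V0), and bounding the strain energy by
   t^2 * volume gives C_X(z, a) >= t Y - E0 V0 t^2 / 2 = Y^2 / (2 E0 V0);
   let Y tend to Z_X. *)

Section Farkas.
Variables (R : realFieldType) (V : lmodType R).
Implicit Types (c phi psi : V -> R) (v : V).

Lemma scalar0 c : scalar c -> c 0 = 0.
Proof. by move=> hc; have := hc 1 0 0; rewrite scale1r addr0 mul1r; lra. Qed.

Lemma scalarZ c k v : scalar c -> c (k *: v) = k * c v.
Proof. by move=> hc; have := hc k v 0; rewrite !addr0 (scalar0 hc) addr0. Qed.

Lemma scalarN c v : scalar c -> c (- v) = - c v.
Proof. by move=> hc; rewrite -scaleN1r (scalarZ _ _ hc) mulN1r. Qed.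

Definition project psi v0 phi v := phi v - psi v / psi v0 * phi v0.

Lemma scalar_project psi v0 phi : scalar psi -> scalar phi -> scalar (project psi v0 phi).
Proof. by move=> hpsi hphi k u w; rewrite /project hphi hpsi; ring. Qed.

Lemma project_shift psi v0 phi v :
  scalar phi -> phi (v - (psi v / psi v0) *: v0) = project psi v0 phi v.
Proof. by move=> hphi; rewrite addrC -scaleNr hphi /project; ring. Qed.

Lemma farkas (T : eqType) (s : seq T) (a : T -> V -> R) c :
  uniq s -> (forall t, scalar (a t)) -> scalar c ->
  (forall v, (forall t, t \in s -> 0 <= a t v) -> 0 <= c v) ->
  exists2 lam : T -> R, (forall t, 0 <= lam t) &
    forall v, c v = \sum_(t <- s) lam t * a t v.
Proof.
elim: s a c => [|t s IH] a c /=.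
  move=> _ _ hc c_ge0; exists (fun=> 0) => // v; rewrite big_nil.
  by apply/eqP; rewrite eq_le -oppr_ge0 -(scalarN _ hc) !c_ge0.
move=> /andP[t_notin_s s_uniq] ha hc c_ge0.
suff [L L_ge0 [mu mu_ge0 c_eq]] : exists2 L, 0 <= L &
    exists2 mu : T -> R, (forall t, 0 <= mu t) &
      forall v, c v = L * a t v + \sum_(t' <- s) mu t' * a t' v.
  exists (fun t' => if t' == t then L else mu t') => [t'|v]; first by case: eqP.
  rewrite big_cons eqxx c_eq; congr (_ + _); apply: eq_big_seq => t' t's.
  by case: eqP t's => // ->; rewrite (negbTE t_notin_s).
have [c_ge0_s|] :=
  pselect (forall v, (forall t', t' \in s -> 0 <= a t' v) -> 0 <= c v).
  have [mu mu_ge0 c_eq] := IH a c s_uniq ha hc c_ge0_s.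
  by exists 0 => //; exists mu => // v; rewrite mul0r add0r.
move=> /existsNP[v0 /not_implyP[a_v0_ge0 /negP]]; rewrite -ltNge => c_v0_lt0.
have d_lt0 : a t v0 < 0.
  rewrite ltNge; apply/negP => a_t_v0_ge0; move: c_v0_lt0; rewrite ltNge c_ge0 // => t'.
  by rewrite inE => /predU1P[-> //|]; apply: a_v0_ge0.
(* Restrict to the hyperplane [a t = 0] by projecting along [v0]. *)
pose P := project (a t) v0.
have [|mu mu_ge0 c_eq] := IH (P \o a) (P c) s_uniq
    (fun t' => scalar_project _ (ha t) (ha t')) (scalar_project _ (ha t) hc).
  move=> v P_ge0; rewrite /P -project_shift //; apply: c_ge0 => t'.
  rewrite inE => /predU1P[->|/P_ge0]; last by rewrite project_shift.
  by rewrite project_shift // /P /project divfK ?subrr // lt_eqF.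
exists ((c v0 - \sum_(t' <- s) mu t' * a t' v0) / a t v0).
  have : 0 <= \sum_(t' <- s) mu t' * a t' v0.
    by rewrite big_seq sumr_ge0 // => t' /a_v0_ge0; apply: mulr_ge0.
  by rewrite -mulrNN -invrN opprB => ?; apply: divr_ge0; lra.
exists mu => // v; move: (c_eq v); rewrite /P /project /=.
under eq_bigr do rewrite mulrBr mulrCA.
rewrite sumrB -mulr_sumr => E.
by rewrite -[c v](subrK (a t v / a t v0 * c v0)) E; ring.
Qed.

Lemma homogenized_bound (T : eqType) (s : seq T) (h : T -> V -> R) g (Y : R) :
  (forall t, scalar (h t)) -> scalar g ->
  (forall v, (forall t, t \in s -> h t v <= 1) -> g v <= Y) ->
  forall v tau, 0 <= tau -> (forall t, t \in s -> h t v <= tau) -> g v <= Y * tau.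
Proof.
move=> hh hg gY v tau; rewrite le_eqVlt => /predU1P[<- h_le0|tau_gt0 h_le].
  rewrite mulr0 leNgt; apply/negP => g_gt0.
  (* [v] is a recession direction along which [g] is unbounded. *)
  pose k := (`|Y| + 1) / g v.
  have k_gt0 : 0 < k by rewrite divr_gt0 // ltr_pwDr ?normr_ge0.
  have : `|Y| + 1 <= Y.
    rewrite -[leLHS](divfK (lt0r_neq0 g_gt0)) -/k -(scalarZ _ _ hg); apply: gY => t ts.
    by rewrite (scalarZ _ _ (hh t)) (le_trans _ ler01) // pmulr_rle0 // h_le0.
  by have := ler_norm Y; lra.
rewrite mulrC -ler_pdivrMl // -(scalarZ _ _ hg); apply: gY => t ts.
by rewrite (scalarZ _ _ (hh t)) ler_pdivrMl // mulr1; apply: h_le.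
Qed.

End Farkas.

Lemma farkas_inhom (R : realFieldType) (V : lmodType R) (T : eqType) (s : seq T)
    (h : T -> V -> R) (g : V -> R) (Y : R) :
  uniq s -> (forall t, scalar (h t)) -> scalar g ->
  (forall v, (forall t, t \in s -> h t v <= 1) -> g v <= Y) ->
  exists lam : T -> R, [/\ forall t, 0 <= lam t,
    forall v, g v = \sum_(t <- s) lam t * h t v & \sum_(t <- s) lam t <= Y].
Proof.
move=> s_uniq hh hg gY.
(* Homogenize: {v | h_t v <= 1} becomes the cone {(v, tau) | 0 <= tau, h_t v <= tau}. *)
pose a (o : option T) (p : V * R) := if o is Some t then p.2 - h t p.1 else p.2.
pose c (p : V * R) := Y * p.2 - g p.1.
have ha o : scalar (a o).
  by case: o => [t|] k u w /=; rewrite -[k *: u.2]/(k * u.2) ?hh; ring.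
have hc : scalar c by move=> k u w; rewrite /c /= -[k *: u.2]/(k * u.2) hg; ring.
have o_uniq : uniq (None :: map Some s).
  rewrite /= map_inj_uniq ?s_uniq ?andbT; last by move=> ? ? [].
  by apply/mapP => -[].
have [|lam lam_ge0 c_eq] := @farkas _ (V * R)%type _ _ _ _ o_uniq ha hc.
  move=> [v tau] a_ge0; rewrite /c subr_ge0 /=.
  apply: (homogenized_bound hh hg gY); first exact: (a_ge0 None (mem_head _ _)).
  move=> t ts; have := a_ge0 (Some t); rewrite inE map_f ?orbT // => /(_ isT) /=.
  by rewrite subr_ge0.
exists (lam \o Some); split => [t|v|]; first exact: lam_ge0.
  have := c_eq (v, 0); rewrite /c big_cons big_map /= mulr0 sub0r mulr0 add0r.
  under eq_bigr do rewrite sub0r mulrN.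
  by rewrite sumrN => /oppr_inj.
have := c_eq (0, 1); rewrite /c big_cons big_map /= (scalar0 hg) mulr1 subr0.
under eq_bigr do rewrite (scalar0 (hh _)) subr0 mulr1.
by have := lam_ge0 None; lra.
Qed.

Lemma sqr_le_of_forall_lt (R : rcfType) (Z b : R) : 0 <= Z -> 0 <= b ->
  (forall Y, 0 <= Y -> Y < Z -> Y ^+ 2 <= b) -> Z ^+ 2 <= b.
Proof.
move=> Z_ge0 b_ge0 Yb; rewrite -(sqr_sqrtr b_ge0) ler_pXn2r ?nnegrE ?sqrtr_ge0 //.
apply/ler_ltP => Y YZ; have [Y_le0|Y_gt0] := lerP Y 0.
  exact: le_trans Y_le0 (sqrtr_ge0 b).
by rewrite -[Y]ger0_norm ?(ltW Y_gt0) // -sqrtr_sqr (ler_sqrt _ b_ge0) Yb // ltW.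
Qed.

Lemma lee_sqr_div_of_forall_lt (R : realType) (c Z : R) (X : \bar R) :
  0 < c -> 0 <= Z -> (0 <= X)%E ->
  (forall Y, 0 <= Y -> Y < Z -> ((Y ^+ 2 / c)%:E <= X)%E) -> ((Z ^+ 2 / c)%:E <= X)%E.
Proof.
move=> c_gt0 Z_ge0; case: X => [r| |] //= r_ge0 YX; last by rewrite leey.
rewrite lee_fin ler_pdivrMr //; apply: sqr_le_of_forall_lt => // [|Y Y_ge0 YZ].
  by rewrite mulr_ge0 // ltW.
by rewrite -ler_pdivrMr // -lee_fin YX.
Qed.

Section DualDisplacement.
Variables (R : realType) (Om : set (R * R)%type) (nb : nat) (x : 'I_nb -> (R * R)%type).
Variable f : 'I_nb -> R.

Lemma len_ge0 a b : 0 <= len x a b.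
Proof. exact: sqrtr_ge0. Qed.

Lemma PX_values_ge0 v : PX_values Om x f v -> 0 <= v.
Proof.
have psum_ge0 F : (forall a b, 0 <= F a b) -> 0 <= psum F.
  by move=> F_ge0; apply: sumr_ge0 => a _; apply: sumr_ge0 => b _; apply: F_ge0.
move=> [s [r [q [s_ge0 [r_ge0 [_ [_ ->]]]]]]].
by rewrite addr_ge0 ?mulr_ge0 // psum_ge0 // => a b; rewrite mulr_ge0 ?len_ge0.
Qed.

Lemma ZX_le v : PX_values Om x f v -> ZX Om x f <= v.
Proof. by move=> PXv; apply: ge_inf => //; exists 0 => w /PX_values_ge0. Qed.

Lemma ZX_ge0 : 0 <= ZX Om x f.
Proof.
have [[v PXv]|PX0] := pselect (PX_values Om x f !=set0).
  by apply: lb_le_inf => [|w /PX_values_ge0]; first exists v.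
rewrite /ZX (_ : PX_values _ _ _ = set0) ?inf0 //.
by apply/seteqP; split => // w PXw; apply: PX0; exists w.
Qed.

(* A displacement (u1, u2, w) is encoded by the rows of a 3 x nb matrix, zeroed
   at the boundary nodes by [interior_part], so that the admissible
   displacements form the whole matrix space. *)
Definition interior_part (M : 'M[R]_(3, nb)) (j : 'I_3) (i : 'I_nb) : R :=
  (~~ `[< onB Om x i >])%:R * M j i.

Lemma interior_part_vanB M j : vanB Om x (interior_part M j).
Proof. by move=> i i_bd; rewrite /interior_part asboolT // mul0r. Qed.

Lemma interior_part_delta j0 i j k : ~ onB Om x i ->
  interior_part (delta_mx j0 i) j k = (j == j0)%:R * (k == i)%:R.
Proof.
move=> i_int; rewrite /interior_part mxE; have [->|k_neq_i] := eqVneq k i.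
  by rewrite asboolF //= mul1r andbT mulr1.
by rewrite andbF !mulr0.
Qed.

Definition edges : seq ('I_nb * 'I_nb) := enum [pred p : 'I_nb * 'I_nb | (p.1 < p.2)%N].

Lemma psum_edges (F : 'I_nb -> 'I_nb -> R) : psum F = \sum_(p <- edges) F p.1 p.2.
Proof.
rewrite /psum (pair_big_dep xpredT (fun a b : 'I_nb => (a < b)%N) F) /edges big_enum.
by apply: eq_bigl => p; rewrite inE.
Qed.

Variable z : 'I_nb -> R.

Definition strain (p : 'I_nb * 'I_nb) (M : 'M[R]_(3, nb)) : R :=
  ehat x (interior_part M 0) (interior_part M 1) (interior_part M 2) z p.1 p.2.

Definition work (M : 'M[R]_(3, nb)) : R := \sum_i f i * interior_part M 2 i.

Lemma scalar_strain p : scalar (strain p).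
Proof.
by move=> k M N; rewrite /strain /ehat /ek /Bu /Delta /Dw /interior_part !mxE; ring.
Qed.

Lemma scalar_work : scalar work.
Proof.
move=> k M N; rewrite /work mulr_sumr -big_split; apply: eq_bigr => i _.
by rewrite /interior_part !mxE /=; ring.
Qed.

Definition bar_force (lam : 'I_nb * 'I_nb -> R) (a b : 'I_nb) : R :=
  lam (a, b) / (len x a b * (1 + Delta x z a b ^+ 2)).

Lemma bar_force_ge0 lam a b : (forall p, 0 <= lam p) -> 0 <= bar_force lam a b.
Proof.
move=> lam_ge0; rewrite divr_ge0 ?mulr_ge0 ?len_ge0 //.
by rewrite addr_ge0 ?ler01 ?sqr_ge0.
Qed.

Lemma equilibrium_of_multipliers lam i :
  (forall M, work M = \sum_(p <- edges) lam p * strain p M) -> ~ onB Om x i ->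
  let s := bar_force lam in
  B1t x s i = 0 /\ B2t x s i = 0 /\ Dt (fun a b => Delta x z a b * s a b) i = f i.
Proof.
move=> work_eq i_int s.
have balance j0 :
    \sum_(p <- edges) lam p * strain p (delta_mx j0 i) = (j0 == 2)%:R * f i.
  rewrite -work_eq /work (bigD1 i) //= big1 => [|k k_neq_i].
    by rewrite interior_part_delta // eqxx mulr1 addr0 mulrC eq_sym.
  by rewrite interior_part_delta // (negbTE k_neq_i) !mulr0.
split; [|split].
- transitivity (\sum_(p <- edges) lam p * strain p (delta_mx 0 i)).
    rewrite /B1t psum_edges; apply: eq_bigr => -[a b] _.
    rewrite /strain /ehat /ek /Bu /Delta /Dw /= !interior_part_delta //= /inc /s.
    by rewrite /bar_force /Delta /Dw invfM; ring.
  by rewrite balance /= mul0r.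
- transitivity (\sum_(p <- edges) lam p * strain p (delta_mx 1 i)).
    rewrite /B2t psum_edges; apply: eq_bigr => -[a b] _.
    rewrite /strain /ehat /ek /Bu /Delta /Dw /= !interior_part_delta //= /inc /s.
    by rewrite /bar_force /Delta /Dw invfM; ring.
  by rewrite balance /= mul0r.
- transitivity (\sum_(p <- edges) lam p * strain p (delta_mx 2 i)).
    rewrite /Dt psum_edges; apply: eq_bigr => -[a b] _.
    rewrite /strain /ehat /ek /Bu /Delta /Dw /= !interior_part_delta //= /inc /s.
    by rewrite /bar_force /Delta /Dw invfM; ring.
  by rewrite balance /= mul1r.
Qed.

Lemma PX_values_of_multipliers (lam : 'I_nb * 'I_nb -> R) :
  (forall p, 0 <= lam p) -> (forall M, work M = \sum_(p <- edges) lam p * strain p M) ->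
  exists2 v, PX_values Om x f v & v <= \sum_(p <- edges) lam p.
Proof.
move=> lam_ge0 work_eq.
pose s := bar_force lam.
pose q a b := Delta x z a b * s a b.
pose r a b := Delta x z a b ^+ 2 * s a b / 2.
have s_ge0 a b : 0 <= s a b by apply: bar_force_ge0.
have r_ge0 a b : 0 <= r a b.
  by apply: divr_ge0; [exact: mulr_ge0 (sqr_ge0 _) (s_ge0 a b)|exact: ler0n].
exists (psum (fun a b => len x a b * s a b) + 2 * psum (fun a b => len x a b * r a b)).
  exists s, r, q; split; [exact: s_ge0|split; [exact: r_ge0|split; [|split=> //]]].
    by move=> i; apply: equilibrium_of_multipliers.
  move=> a b _; split; first exact: r_ge0; split; first exact: s_ge0.
  suff -> : q a b ^+ 2 = 2 * r a b * s a b by [].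
  by rewrite /q /r; field.
rewrite !psum_edges mulr_sumr -big_split /=; apply: ler_sum => -[a b] _ /=.
(* A bar of length 0 gets [s = lam / 0 = 0] and contributes nothing. *)
have [->|len_neq0] := eqVneq (len x a b) 0; first by rewrite !mul0r mulr0 addr0.
suff -> : len x a b * s a b + 2 * (len x a b * r a b) = lam (a, b) by [].
rewrite /r /s /bar_force; field.
by rewrite len_neq0 lt0r_neq0 // ltr_wpDr ?sqr_ge0.
Qed.

Lemma exists_admissible_displacement (Y : R) : Y < ZX Om x f ->
  exists2 M, (forall p, p \in edges -> strain p M <= 1) & Y <= work M.
Proof.
move=> Y_lt_ZX; apply: contrapT => no_M.
have [|lam [lam_ge0 work_eq lam_le]] :=
    farkas_inhom (s := edges) (Y := Y) (enum_uniq _) scalar_strain scalar_work.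
  move=> M M_adm; rewrite leNgt; apply/negP => Y_lt_work.
  by apply: no_M; exists M => //; apply: ltW.
have [v PXv v_le] := PX_values_of_multipliers lam_ge0 work_eq.
by have := ZX_le PXv; lra.
Qed.

Variables (E0 V0 : R) (al : 'I_nb -> 'I_nb -> R).
Hypotheses (E0_gt0 : 0 < E0) (V0_gt0 : 0 < V0) (al_ge0 : forall a b, 0 <= al a b).
Hypothesis volume_le : psum (fun a b => al a b * lhat x z a b) <= V0.

Definition energy (M : 'M[R]_(3, nb)) : R :=
  psum (fun a b => Num.max (strain (a, b) M) 0 ^+ 2 * al a b * lhat x z a b).

Lemma CX_ge_work_energy M : ((work M - E0 / 2 * energy M)%:E <= CX Om x f E0 z al)%E.
Proof.
apply: ereal_sup_ubound; exists (interior_part M 0), (interior_part M 1), (interior_part M 2).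
by split; [|split; [|split]] => //; apply: interior_part_vanB.
Qed.

Lemma energy_scale_le t M : 0 <= t -> (forall p, p \in edges -> strain p M <= 1) ->
  energy (t *: M) <= t ^+ 2 * V0.
Proof.
move=> t_ge0 M_adm; apply: le_trans (ler_wpM2l (sqr_ge0 t) volume_le).
rewrite /energy /psum mulr_sumr; apply: ler_sum => a _; rewrite mulr_sumr.
apply: ler_sum => b ab; rewrite (scalarZ _ _ (scalar_strain _)) -mulrA.
have lhat_ge0 : 0 <= lhat x z a b by rewrite mulr_ge0 ?sqrtr_ge0 ?len_ge0.
apply: ler_wpM2r; first exact: mulr_ge0 (al_ge0 a b) lhat_ge0.
rewrite ler_pXn2r ?nnegrE ?le_max ?lexx ?orbT //.
by rewrite ge_max t_ge0 andbT ler_piMr // M_adm // mem_enum.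
Qed.

Lemma CX_ge_sqr_work Y M : 0 <= Y -> (forall p, p \in edges -> strain p M <= 1) ->
  Y <= work M -> ((Y ^+ 2 / (2 * E0 * V0))%:E <= CX Om x f E0 z al)%E.
Proof.
move=> Y_ge0 M_adm Y_le_work.
(* [t Y - E0 V0 t^2 / 2] is maximal at this [t]. *)
pose t := Y / (E0 * V0).
have t_ge0 : 0 <= t by rewrite divr_ge0 // mulr_ge0 // ltW.
apply: le_trans (CX_ge_work_energy (t *: M)); rewrite lee_fin (scalarZ _ _ scalar_work).
have := ler_wpM2l t_ge0 Y_le_work.
have := ler_wpM2l (ltW (divr_gt0 E0_gt0 (ltr0Sn _ 1))) (energy_scale_le t_ge0 M_adm).
have -> : Y ^+ 2 / (2 * E0 * V0) = t * Y - E0 / 2 * (t ^+ 2 * V0).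
  by rewrite /t; field; rewrite !lt0r_neq0.
lra.
Qed.

Lemma CX_ge0 : (0 <= CX Om x f E0 z al)%E.
Proof.
have := @CX_ge_sqr_work 0 0 (lexx 0); rewrite expr0n mul0r; apply.
  by move=> p _; rewrite scalar0 ?ler01 //; apply: scalar_strain.
by rewrite scalar0 //; apply: scalar_work.
Qed.

End DualDisplacement.

Theorem lemma6p1 (R : realType) (Om : set (R * R)%type) (nb : nat) (x : 'I_nb -> (R * R)%type)
  (f : 'I_nb -> R) (E0 V0 : R) :
  bounded_domain Om ->
  injective x ->
  (forall i, closure Om (x i)) ->
  (forall i, ~ onB Om x i -> interior (conv_hull x (onB Om x)) (x i)) ->
  0 < E0 -> 0 < V0 ->
  (((ZX Om x f) ^+ 2 / (2 * E0 * V0))%:E <= CXmin Om x f E0 V0)%E.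
Proof.
(* Weak duality does not use the geometry of Omega and X. *)
move=> _ _ _ _ E0_gt0 V0_gt0.
apply/ereal_infP => _ [z [al [_ [al_ge0 [volume_le ->]]]]].
apply: lee_sqr_div_of_forall_lt; first by rewrite !mulr_gt0.
- exact: ZX_ge0.
- exact: CX_ge0 E0_gt0 V0_gt0 al_ge0 volume_le.
move=> Y Y_ge0 /(exists_admissible_displacement z)[M M_adm Y_le_work].
exact: (CX_ge_sqr_work E0_gt0 V0_gt0 al_ge0 volume_le Y_ge0 M_adm Y_le_work).
Qed.
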